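(* Let $w\in\mathcal W_n$ have $N$ blocks and suppose its block orbit $\langle w\rangle_\beta=\{\beta^k w:0\le k<N\}$ contains $N$ words. If $v$ is chosen uniformly at random from $\langle w\rangle_\beta$, then for all $i,k\in\{1,\dots,N\}$ the probability that the block of rank $i$ of $v$ is at position $k$ (i.e. $r_k(v)=i$) equals $\frac1N$.
   Context: Let $\mathcal A=\{a_1<a_2<\dots\}$ be a finite or countably infinite totally ordered alphabet. Lexicographic order: $u<v$ if $u$ is a proper prefix of $v$, or $u=ra_is$, $v=ra_jt$ with $i<j$. A word is primitive if it is not of the form $u^r$ with $r\ge 2$. $\mathcal W_n$ is the set of primitive words of length $n$ whose first letter is the smallest letter $a_w$ occurring in $w$ and whose last letter is different from $a_w$. Each $w\in\mathcal W_n$ decomposes uniquely as $w=B_1\cdots B_N$ into blocks: each block begins with a run of $a_w$ and ends just before the next run of $a_w$. For $j=1,\dots,N$ let $w^{(j)}=B_j\cdots B_NB_1\cdots B_{j-1}$; the rank $r_j(w)$ is the rank of $w^{(j)}$ among $w^{(1)},\dots,w^{(N)}$ in increasing lexicographic order (rank 1 = smallest). The block rotation is $\beta w=B_2\cdots B_NB_1$, and the block orbit of $w$ is $\langle w\rangle_\beta=\{w,\beta w,\dots,\beta^{N-1}w\}$. *)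

(* Alphabet A = {a_1 < a_2 < ...} is encoded by nat
   (letter a_i is the natural number i; a finite alphabet is a finite
   initial segment). Words are seq nat. *)
From mathcomp Require Import all_boot all_order all_algebra.
Set Implicit Arguments. Unset Strict Implicit. Unset Printing Implicit Defensive.

Fixpoint lexlt (u v : seq nat) : bool :=
  match u, v with
  | [::], [::] => false
  | [::], _ :: _ => true
  | _ :: _, [::] => false
  | x :: u', y :: v' => (x < y) || ((x == y) && lexlt u' v')
  end.

Definition primitive (w : seq nat) : Prop :=
  ~ exists (u : seq nat) (r : nat), 2 <= r /\ w = flatten (nseq r u).

Definition minletter (w : seq nat) : nat :=
  match w with [::] => 0 | x :: s => foldr minn x s end.

Definition inW (n : nat) (w : seq nat) : Prop :=
  size w = n /\ primitive w /\
  exists x s, w = x :: s /\ x = minletter w /\ last x s != minletter w.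

(* block decomposition with respect to the letter m: each block is a
   (maximal) run of m followed by the (maximal) run of letters <> m before
   the next run of m *)
Fixpoint blocks_aux (m : nat) (fuel : nat) (w : seq nat) : seq (seq nat) :=
  match fuel with
  | 0 => [::]
  | f.+1 =>
    match w with
    | [::] => [::]
    | _ :: _ =>
      let i := find (fun x => x != m) w in
      let r := drop i w in
      let j := find (fun x => x == m) r in
      (take i w ++ take j r) :: blocks_aux m f (drop j r)
    end
  end.

Definition blocks (w : seq nat) : seq (seq nat) :=
  blocks_aux (minletter w) (size w) w.

Definition nblocks (w : seq nat) : nat := size (blocks w).

(* w^(j) = B_j ... B_N B_1 ... B_{j-1}, for 1 <= j <= N *)
Definition brot (w : seq nat) (j : nat) : seq nat :=
  flatten (rot j.-1 (blocks w)).

Definition rank (w : seq nat) (j : nat) : nat :=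
  (count (fun l => lexlt (brot w l) (brot w j)) (iota 1 (nblocks w))).+1.

Definition beta (w : seq nat) : seq nat := flatten (rot 1 (blocks w)).

Definition border (w : seq nat) : seq (seq nat) :=
  undup [seq iter k beta w | k <- iota 0 (nblocks w)].

From mathcomp Require Import all_boot all_order all_algebra.
Set Implicit Arguments. Unset Strict Implicit. Unset Printing Implicit Defensive.
Import Order.TTheory.

(* The blocks of the block rotation [flatten (rot m bs)] of [w = flatten bs]
   are [rot m bs], so its block rotations are those of [w] relabelled by the
   cyclic shift [j |-> m + j mod N], whence [r_k(v) = r_(m+k)(w)] for the
   [m]-th word [v] of the orbit.  The orbit having [N] elements means that the
   [N] block rotations of [w] are distinct, so [j |-> r_j(w)] is a bijection
   onto [1..N]; as [m] ranges over the orbit, [m + k mod N] ranges over all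
   positions exactly once, so exactly one word [v] of the orbit has
   [r_k(v) = i]. *)

Lemma lexltE u v : lexlt u v = (u < v :> seqlexi nat)%O.
Proof.
elim: u v => [|x u IH] [|y v] //=.
by rewrite IH ltxi_cons leEnat; case: ltngtP => //= [/ltnW ->|->]; rewrite ?lexx.
Qed.

Lemma count_rank_uniq d (T : orderType d) (s : seq T) i :
  uniq s -> i < size s -> count (fun x => count (< x)%O s == i) s = 1.
Proof.
case: s => [//|x0 s'] s_uniq lt_i; set s := x0 :: s' in s_uniq lt_i *.
set t := sort <=%O s.
have s_t : perm_eq s t by rewrite perm_sym perm_sort.
have t_sorted : sorted <%O t by rewrite sort_lt_sorted.
have size_t : size t = size s by rewrite size_sort.
rewrite (permP s_t); under eq_count => x do rewrite (permP s_t).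
rewrite -{2}(mkseq_nth x0 t) /mkseq count_map size_t.
rewrite (eq_in_count (a2 := pred1 i)); last first.
  by move=> j; rewrite mem_iota /= => lt_j; rewrite count_lt_nth ?size_t.
by rewrite count_uniq_mem ?iota_uniq // mem_iota lt_i.
Qed.

Lemma perm_iota_addn_mod N m : perm_eq [seq (m + j) %% N | j <- iota 0 N] (iota 0 N).
Proof.
have [->|N_gt0] := posnP N; first by [].
have shift_uniq : uniq [seq (m + j) %% N | j <- iota 0 N].
  rewrite map_inj_in_uniq ?iota_uniq // => x y; rewrite !mem_iota => lt_x lt_y.
  by move/eqP; rewrite eqn_modDl !modn_small // => /eqP.
have shift_sub : {subset [seq (m + j) %% N | j <- iota 0 N] <= iota 0 N}.
  by move=> _ /mapP[j _ ->]; rewrite mem_iota ltn_mod N_gt0.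
have [|_ shift_eq] := uniq_min_size shift_uniq shift_sub; first by rewrite size_map.
exact: uniq_perm shift_uniq (iota_uniq 0 N) shift_eq.
Qed.

Lemma rot_rot_mod (T : Type) (s : seq T) a b : a < size s -> b < size s ->
  rot a (rot b s) = rot ((a + b) %% size s) s.
Proof.
move=> lt_a lt_b; rewrite rot_add_mod ?(ltnW lt_a) ?(ltnW lt_b) //.
case: ltngtP => [lt_ab|lt_ba|->]; last by rewrite modnn rot_size rot0.
- by rewrite modn_small.
- rewrite -{2}(subnK (ltnW lt_ba)) modnDr modn_small //.
  by rewrite ltn_subLR ?(ltnW lt_ba) //; exact: leq_add lt_a (ltnW lt_b).
Qed.

Definition is_block (m : nat) (B : seq nat) : Prop :=
  exists a t, [/\ 0 < a, t != [::], m \notin t & B = nseq a m ++ t].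

Lemma size_flatten_blocks m bs : {in bs, forall B, is_block m B} ->
  size bs <= size (flatten bs).
Proof.
elim: bs => [|B bs IH] //= bs_blocks.
have [a [t [_ t_nil _ ->]]] := bs_blocks B (mem_head _ _).
rewrite !size_cat -add1n leq_add ?(leq_trans _ (leq_addl _ _)) ?lt0n ?size_eq0 //.
by apply: IH => B' B'_bs; apply: bs_blocks; rewrite inE B'_bs orbT.
Qed.

Lemma blocks_aux_flatten m fuel bs : {in bs, forall B, is_block m B} ->
  size bs <= fuel -> blocks_aux m fuel (flatten bs) = bs.
Proof.
elim: bs fuel => [|B bs IH] [|fuel] //= bs_blocks /ltnSE le_fuel.
have [a [t [a_gt0 t_nil m_t ->]]] := bs_blocks B (mem_head _ _).
have {}bs_blocks : {in bs, forall B, is_block m B}.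
  by move=> B' B'_bs; apply: bs_blocks; rewrite inE B'_bs orbT.
have no_m_in_t : has (fun x => x == m) t = false.
  by apply/hasPn => x x_t; apply: contraNneq m_t => <-.
have head_m : find (fun x => x == m) (flatten bs) = 0.
  case: bs bs_blocks {IH le_fuel} => //= B' bs' /(_ B' (mem_head _ _)).
  by case=> [[|a'] [t' [// _ _ _ ->]]] /=; rewrite eqxx.
rewrite -catA; case: a a_gt0 => // a _ /=; rewrite eqxx /=.
have -> : find (fun y => y != m) (nseq a m ++ t ++ flatten bs) = a.
  rewrite find_cat has_nseq eqxx andbF size_nseq.
  case: t t_nil m_t {no_m_in_t} => //= y t _; rewrite inE negb_or => /andP[m_y _].
  by rewrite eq_sym m_y addn0.
rewrite drop_size_cat ?size_nseq // take_size_cat ?size_nseq //.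
by rewrite find_cat no_m_in_t head_m addn0 take_size_cat // drop_size_cat // IH.
Qed.

(* [nseq a m ++ t] is the block being read; the side condition says that the
   word does not end with [m]. *)
Lemma flatten_blocks_cat (m a : nat) (t w : seq nat) : 0 < a -> m \notin t ->
  (if w is [::] then t != [::] else last m w != m) ->
  exists2 bs, {in bs, forall B, is_block m B} & nseq a m ++ t ++ w = flatten bs.
Proof.
elim: w a t => [|y w IH] a t a_gt0 m_t w_end.
  exists [:: nseq a m ++ t]; last by rewrite /= !cats0.
  by move=> B; rewrite mem_seq1 => /eqP->; exists a, t.
case: (eqVneq y m) w_end => [->|y_m] w_end; last first.
  have [||bs bs_blocks E] := IH a (rcons t y) a_gt0.
  - by rewrite mem_rcons inE negb_or eq_sym y_m.
  - by case: w w_end {IH} => //=; rewrite -cats1; case: t {m_t}.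
  by exists bs; rewrite // -E -cats1 -!catA.
have {}w_end (t' : seq nat) :
    is_true (if w is [::] then t' != [::] else last m w != m).
  by case: w w_end {IH} => //=; rewrite eqxx.
case: t m_t => [|z t] m_t.
  have [bs bs_blocks E] := IH a.+1 [::] isT m_t (w_end _).
  by exists bs; rewrite // -E /= -[m :: w]/(nseq 1 m ++ w) catA -nseqD addn1.
have [bs bs_blocks E] := IH 1 [::] isT isT (w_end _).
exists ((nseq a m ++ z :: t) :: bs); last by rewrite /= -E -!catA.
by move=> B; rewrite inE => /predU1P[->|]; [exists a, (z :: t)|apply: bs_blocks].
Qed.

Lemma minletter_cons_spec x s :
  minletter (x :: s) \in x :: s /\ {in x :: s, forall z, minletter (x :: s) <= z}.
Proof.
rewrite /=; elim: s => [|y s [IH1 IH2]] /=.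
  by split=> [|z]; rewrite ?mem_seq1 // => /eqP->.
set f := foldr minn x s in IH1 IH2 *.
split=> [|z].
  case: (leqP y f) => _; first by rewrite !inE eqxx orbT.
  by move: IH1; rewrite !inE => /orP[->|->]; rewrite ?orbT.
rewrite !inE => /or3P[zx|/eqP->|zs]; rewrite geq_min ?leqnn ?orbT //.
- by rewrite IH2 ?orbT // inE zx.
- by rewrite IH2 ?orbT // inE zs orbT.
Qed.

Lemma minletter_perm l l' : perm_eq l l' -> minletter l = minletter l'.
Proof.
case: l => [|x s]; case: l' => [|y s'] pl; try by have := perm_size pl.
have [min_l le_l] := minletter_cons_spec x s.
have [min_l' le_l'] := minletter_cons_spec y s'.
by apply/eqP; rewrite eqn_leq le_l ?le_l' ?(perm_mem pl) // -(perm_mem pl).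
Qed.

Lemma blocks_flatten_rot bs j :
  {in bs, forall B, is_block (minletter (flatten bs)) B} ->
  blocks (flatten (rot j bs)) = rot j bs.
Proof.
move=> bs_blocks; have perm_rot_bs : perm_eq (flatten (rot j bs)) (flatten bs).
  by apply: perm_flatten; rewrite perm_rot.
rewrite /blocks (minletter_perm perm_rot_bs) (perm_size perm_rot_bs).
apply: blocks_aux_flatten; first by move=> B; rewrite mem_rot; apply: bs_blocks.
by rewrite size_rot; apply: size_flatten_blocks bs_blocks.
Qed.

Lemma blocks_flatten bs :
  {in bs, forall B, is_block (minletter (flatten bs)) B} -> blocks (flatten bs) = bs.
Proof. by move=> /(blocks_flatten_rot 0); rewrite rot0. Qed.

Lemma inW_flatten_blocks n w : inW n w ->
  exists2 bs, {in bs, forall B, is_block (minletter w) B} & w = flatten bs.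
Proof.
case=> _ [_ [x [s [w_xs [x_min s_end]]]]].
have [|bs bs_blocks E] := @flatten_blocks_cat (minletter w) 1 [::] s isT isT.
  by case: s w_xs s_end => [|y s] //= _; rewrite -x_min eqxx.
by exists bs => //; rewrite -E /= -x_min.
Qed.

Definition block_rotations (w : seq nat) : seq (seqlexi nat) :=
  [seq brot w j.+1 | j <- iota 0 (nblocks w)].

Lemma rankE w k :
  rank w k = (count (< (brot w k : seqlexi nat))%O (block_rotations w)).+1.
Proof.
rewrite /rank /block_rotations -[1]/(1 + 0) iotaDl !count_map.
by congr _.+1; apply: eq_count => j; rewrite /= lexltE.
Qed.

Section BlockRotations.

Variables (n : nat) (w : seq nat).
Hypothesis w_W : inW n w.

Local Notation N := (nblocks w).

Lemma flatten_blocks : flatten (blocks w) = w.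
Proof.
have [bs bs_blocks w_bs] := inW_flatten_blocks w_W; rewrite w_bs in bs_blocks *.
by rewrite blocks_flatten.
Qed.

Lemma blocks_brot j : blocks (brot w j.+1) = rot j (blocks w).
Proof.
have [bs bs_blocks w_bs] := inW_flatten_blocks w_W; rewrite w_bs in bs_blocks *.
by rewrite /brot /= (blocks_flatten bs_blocks) blocks_flatten_rot.
Qed.

Lemma nblocks_brot j : nblocks (brot w j.+1) = N.
Proof. by rewrite /nblocks blocks_brot size_rot. Qed.

Lemma brot_brot m l : m < N -> l < N ->
  brot (brot w m.+1) l.+1 = brot w ((m + l) %% N).+1.
Proof. by move=> lt_m lt_l; rewrite /brot /= blocks_brot rot_rot_mod // addnC. Qed.

Lemma iter_beta m : m <= N -> iter m beta w = brot w m.+1.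
Proof.
elim: m => [|m IH] lt_m /=; first by rewrite /brot /= rot0 flatten_blocks.
by rewrite IH 1?ltnW // /beta blocks_brot /brot /= -rotD ?size_rot // addnC.
Qed.

Lemma border_block_rotations : border w = undup (block_rotations w).
Proof.
congr undup; apply/eq_in_map => m; rewrite mem_iota => /ltnW.
exact: iter_beta.
Qed.

Lemma rank_brot m k : m < N -> k < N ->
  rank (brot w m.+1) k.+1 = rank w ((m + k) %% N).+1.
Proof.
move=> lt_m lt_k; rewrite !rankE brot_brot //; congr _.+1.
apply/permP; rewrite /block_rotations nblocks_brot //.
have -> : [seq brot (brot w m.+1) j.+1 | j <- iota 0 N]
          = [seq brot w ((m + j) %% N).+1 | j <- iota 0 N].
  by apply/eq_in_map => j; rewrite mem_iota => lt_j; apply: brot_brot.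
by rewrite (map_comp (fun c => brot w c.+1)) perm_map ?perm_iota_addn_mod.
Qed.

Lemma uniq_block_rotations : size (border w) = N -> uniq (block_rotations w).
Proof.
move=> size_border; apply: contraFT (ltnn N); rewrite -ltn_size_undup.
by rewrite -{1}size_border border_block_rotations size_map size_iota.
Qed.

Lemma count_rank_block_rotations i k : uniq (block_rotations w) -> i < N -> k < N ->
  count (fun v => rank v k.+1 == i.+1) (block_rotations w) = 1.
Proof.
move=> rotations_uniq lt_i lt_k; rewrite /block_rotations count_map.
rewrite (eq_in_count (a2 := fun m => rank w ((k + m) %% N).+1 == i.+1)); last first.
  by move=> m; rewrite mem_iota /= => lt_m; rewrite rank_brot // addnC.
rewrite -(count_map _ (fun c => rank w c.+1 == i.+1)) (permP (perm_iota_addn_mod _ _)).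
under eq_count => c do rewrite rankE eqSS.
rewrite -(count_map (fun c => brot w c.+1 : seqlexi nat)
                    (fun x => count (< x)%O (block_rotations w) == i)).
by rewrite count_rank_uniq // size_map size_iota.
Qed.

End BlockRotations.

Theorem corollary1 (n : nat) (w : seq nat) :
  inW n w ->
  size (border w) = nblocks w ->
  forall i k : nat, 1 <= i <= nblocks w -> 1 <= k <= nblocks w ->
  ((count (fun v => rank v k == i) (border w))%:R / (size (border w))%:R
     = 1 / (nblocks w)%:R :> rat)%R.
Proof.
move=> w_W size_border [//|i] [//|k] /andP[_ lt_i] /andP[_ lt_k].
have rotations_uniq := uniq_block_rotations w_W size_border.
rewrite size_border (border_block_rotations w_W) undup_id //.
by rewrite (count_rank_block_rotations w_W).
Qed.
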